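(* Let $V$ be a vector configuration of rank $r$ containing no copy of the zero vector, with dual degree $\deg^*(V)=\delta$ and with $n=r+d+1=2r+2\delta-1$ elements. Then $V$ admits a codegree$^*$ decomposition of length at least $r-1=d+1-2\delta$.
   Context: A vector configuration is a finite family (repetitions allowed) $V$ of vectors in $\mathbb{R}^r$; a subconfiguration is a subfamily, $\operatorname{rank}(V)=\dim\operatorname{lin}(V)$, and cardinalities count multiplicities. For a nonzero linear functional $f$, the oriented linear hyperplane $H=\{f=0\}$ has $H^+=\{f>0\}$, $\overline{H}^-=\{f\le0\}$. Dual codegree: $\operatorname{codeg}^*(W)=\min_H|\overline{H}^-\cap W|$; dual degree: $\deg^*(W)=\max_H|H^+\cap W|-\operatorname{rank}(W)$, over oriented linear hyperplanes $H$. A codegree$^*$ decomposition of $V$ of length $m$ is a partition $V=V_0\uplus V_1\uplus\dots\uplus V_m$ into subconfigurations ($V_0$ possibly empty) with $\operatorname{codeg}^*(V)=\sum_{i=1}^m\operatorname{codeg}^*(V_i)$ and $\operatorname{codeg}^*(V_i)\ge1$ for $i\ge1$. *)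

From HB Require Import structures.
From mathcomp Require Import all_boot all_order all_algebra.
From mathcomp Require Import boolp reals.

Set Implicit Arguments.
Unset Strict Implicit.
Unset Printing Implicit Defensive.

Import Order.TTheory GRing.Theory Num.Theory.
Local Open Scope ring_scope.

(* A vector configuration of n vectors in R^m is V : 'I_n -> 'rV[R]_m
   (a family, repetitions allowed).  A subconfiguration is given by a set of
   indices S : {set 'I_n}.  A linear functional on R^m is given by a column
   vector c : 'cV[R]_m, f_c(v) = v *m c; the oriented hyperplane H = {f_c = 0}
   is a nonzero functional c != 0. *)

Section VC.
Variables (R : realType) (n m : nat) (V : 'I_n -> 'rV[R]_m).

Definition fval (c : 'cV[R]_m) (v : 'rV[R]_m) : R := (v *m c) ord0 ord0.

Definition vrank (S : {set 'I_n}) : nat := \rank (\sum_(i in S) <<V i>>)%MS.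

Definition cnt_le (S : {set 'I_n}) (c : 'cV[R]_m) : nat :=
  #|[set i in S | fval c (V i) <= 0]|.
Definition cnt_gt (S : {set 'I_n}) (c : 'cV[R]_m) : nat :=
  #|[set i in S | 0 < fval c (V i)]|.

(* codeg*(W) = min over oriented linear hyperplanes of |H^- closed ∩ W|.
   All attained values lie in [0, n], so the min over k < n.+1 is exact
   (the default n is only used if there is no nonzero functional, m = 0). *)
Definition codeg_star (S : {set 'I_n}) : nat :=
  \big[minn/n]_(k < n.+1 | `[< exists c : 'cV[R]_m, c != 0 /\ cnt_le S c = k >])
     (k : nat).

(* deg*(W) = max over oriented linear hyperplanes of |H^+ ∩ W| - rank(W) *)
Definition deg_star (S : {set 'I_n}) : int :=
  (\max_(k < n.+1 | `[< exists c : 'cV[R]_m, c != 0 /\ cnt_gt S c = k >])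
     (k : nat))%:Z - (vrank S)%:Z.

(* codegree* decomposition of V of length k: blk assigns each element either
   to V_0 (None) or to V_(i+1) (Some i), i < k. *)
Definition codeg_decomposition (k : nat) (blk : 'I_n -> option 'I_k) : Prop :=
  codeg_star setT = \sum_(i < k) codeg_star [set x | blk x == Some i]
  /\ forall i : 'I_k, (1 <= codeg_star [set x | blk x == Some i])%N.

End VC.

(* The hypothesis n = 2r + 2delta - 1 says exactly that V is balanced,
   |V| = 2 codeg*(V) + 1, because deg*(V) = |V| - codeg*(V) - r.  In a balanced
   configuration a linear hyperplane containing some elements of V, all lying
   on the positive side of a functional g, contains at most one element:
   tilting the hyperplane slightly towards g or towards -g pushes these
   elements to one side, and codeg* bounds both open sides from below.
   If V contains an antipodal pair {u, -lu}, removing it lowers codeg* by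
   exactly one and the rank by at most one, keeps V balanced, and the pair
   itself has codeg* = 1; so antipodal pairs are peeled off inductively.
   Without antipodal pairs no two vectors are parallel and the plane spanned by
   any two contains a third one; in an affine chart this is the hypothesis of
   the Sylvester-Gallai theorem, so the rank is at most 2 and what remains is
   one last block (or a single vector, when codeg* = 0). *)

From HB Require Import structures.
From mathcomp Require Import all_boot all_order all_algebra.
From mathcomp Require Import boolp reals.
From mathcomp Require Import ring lra zify.
Import Order.TTheory GRing.Theory Num.Theory.
Local Open Scope ring_scope.
Set Implicit Arguments.
Unset Strict Implicit.
Unset Printing Implicit Defensive.

Section SmallPerturbation.
Variable R : realType.

Lemma exists_small_scale (I : finType) (a b : I -> R) :
  exists2 e : R, 0 < e & forall i, a i != 0 -> `|e * b i| < `|a i|.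
Proof.
pose e := \big[Num.min/1]_(i | a i != 0) (`|a i| / (`|b i| + 1)).
have b1_gt0 i : 0 < `|b i| + 1 by rewrite ltr_wpDl.
have e_gt0 : 0 < e.
  apply: (big_ind (fun x => 0 < x)) => // [x y x0 y0|j aj].
    by rewrite lt_min x0 y0.
  by rewrite divr_gt0 ?normr_gt0.
exists e => // i ai.
have le_e : e <= `|a i| / (`|b i| + 1) by apply: bigmin_le_cond.
rewrite normrM (gtr0_norm e_gt0).
apply: (le_lt_trans (ler_wpM2r (normr_ge0 _) le_e)).
rewrite mulrAC ltr_pdivrMr // ltr_pM2l ?normr_gt0 //.
by rewrite ltrDl.
Qed.

Lemma sign_addr_small (a b : R) : `|b| < `|a| ->
  (0 < a -> 0 < a + b) /\ (a < 0 -> a + b < 0).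
Proof.
rewrite ltr_norml => /andP [lb ub].
by split => ha; move: lb ub; rewrite ?(gtr0_norm ha) ?(ltr0_norm ha); lra.
Qed.

End SmallPerturbation.

Section DotProduct.
Variables (R : realType) (m : nat).
Implicit Types (u v w : 'rV[R]_m).

Definition dot u v := \sum_j u 0 j * v 0 j.

Lemma dotC u v : dot u v = dot v u.
Proof. by apply: eq_bigr => j _; rewrite mulrC. Qed.

Lemma dotDl u v w : dot (u + v) w = dot u w + dot v w.
Proof. by rewrite /dot -big_split; apply: eq_bigr => j _; rewrite mxE mulrDl. Qed.

Lemma dotZl k u v : dot (k *: u) v = k * dot u v.
Proof. by rewrite /dot mulr_sumr; apply: eq_bigr => j _; rewrite mxE mulrA. Qed.

Lemma dotNl u v : dot (- u) v = - dot u v.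
Proof. by rewrite -scaleN1r dotZl mulN1r. Qed.

Lemma dotBl u v w : dot (u - v) w = dot u w - dot v w.
Proof. by rewrite dotDl dotNl. Qed.

Lemma dotBr u v w : dot w (u - v) = dot w u - dot w v.
Proof. by rewrite !(dotC w) dotBl. Qed.

Lemma dotZr k u v : dot u (k *: v) = k * dot u v.
Proof. by rewrite !(dotC u) dotZl. Qed.

Lemma dot_ge0 u : 0 <= dot u u.
Proof. by apply: sumr_ge0 => j _; rewrite -expr2 sqr_ge0. Qed.

Lemma dot_eq0 u : (dot u u == 0) = (u == 0).
Proof.
apply/eqP/eqP => [u0|->]; last by rewrite /dot big1 // => j _; rewrite mxE mul0r.
apply/matrixP => i j; rewrite ord1 mxE; apply/eqP; rewrite -sqrf_eq0 expr2.
by rewrite (psumr_eq0P _ u0) // => k _; rewrite -expr2 sqr_ge0.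
Qed.

Lemma dot_gt0 u : u != 0 -> 0 < dot u u.
Proof. by move=> u0; rewrite lt_def dot_eq0 u0 dot_ge0. Qed.

End DotProduct.

Section Functionals.
Variables (R : realType) (m : nat).
Implicit Types (c g : 'cV[R]_m) (u v : 'rV[R]_m).

Lemma fvalDl c g v : fval (c + g) v = fval c v + fval g v.
Proof. by rewrite /fval mulmxDr mxE. Qed.

Lemma fvalZl a c v : fval (a *: c) v = a * fval c v.
Proof. by rewrite /fval -scalemxAr mxE. Qed.

Lemma fvalNl c v : fval (- c) v = - fval c v.
Proof. by rewrite /fval mulmxN mxE. Qed.

Lemma fval0l v : fval 0 v = 0.
Proof. by rewrite /fval mulmx0 mxE. Qed.

Lemma fvalDr c u v : fval c (u + v) = fval c u + fval c v.
Proof. by rewrite /fval mulmxDl mxE. Qed.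

Lemma fvalZr a c v : fval c (a *: v) = a * fval c v.
Proof. by rewrite /fval -scalemxAl mxE. Qed.

Lemma fvalNr c v : fval c (- v) = - fval c v.
Proof. by rewrite -scaleN1r fvalZr mulN1r. Qed.

Lemma fval0r c : fval c 0 = 0.
Proof. by rewrite /fval mul0mx mxE. Qed.

Lemma fvalMl p (A : 'M[R]_(m, p)) (h : 'cV[R]_p) v :
  fval (A *m h) v = fval h (v *m A).
Proof. by rewrite /fval mulmxA. Qed.

Lemma fval_tr u v : fval u^T v = dot v u.
Proof. by rewrite /fval mxE; apply: eq_bigr => j _; rewrite mxE. Qed.

Lemma fval_tr_gt0 u : u != 0 -> 0 < fval u^T u.
Proof. by rewrite fval_tr; apply: dot_gt0. Qed.

(* [h] is the point [(t ^+ j)_j] of the moment curve, for a [t] that is a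
   root of none of the nonzero polynomials [\sum_j w i 0 j X^j]. *)
Lemma exists_nonvanishing_functional (I : finType) (w : I -> 'rV[R]_m) :
  exists h : 'cV[R]_m, forall i, w i != 0 -> fval h (w i) != 0.
Proof.
pose p i : {poly R} := \sum_(j < m) w i 0 j *: 'X^j.
have pE i t : (p i).[t] = fval (\col_(j < m) t ^+ j) (w i).
  rewrite horner_sum /fval !mxE; apply: eq_bigr => j _.
  by rewrite hornerZ hornerXn !mxE.
have p_neq0 i : w i != 0 -> p i != 0.
  case/matrix0Pn => i0 [j]; rewrite ord1 => wj; apply: contraNneq wj.
  move=> /(congr1 (fun q : {poly R} => q`_j)); rewrite coef_sum coef0 (bigD1 j) //= big1.
    by rewrite coefZ coefXn eqxx mulr1 addr0 => ->.
  by move=> k kj; rewrite coefZ coefXn val_eqE eq_sym (negbTE kj) mulr0.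
pose P := \prod_(i | w i != 0) p i.
have P_neq0 : P != 0 by apply/prodf_neq0 => i; apply: p_neq0.
pose rs := [seq (k%:R : R) | k <- iota 0 (size P)].
have /allPn [t _ Pt] : ~~ all (root P) rs.
  apply: contraL (leqnn (size P)) => Prs; rewrite -ltnNge.
  rewrite -[X in (X < _)%N](size_iota 0) -(size_map (fun k => k%:R : R)).
  apply: max_poly_roots => //; rewrite map_inj_uniq ?iota_uniq //.
  by move=> x y /eqP; rewrite eqr_nat => /eqP.
exists (\col_(j < m) t ^+ j) => i wi; rewrite -pE.
by move: Pt; rewrite /root /P horner_prod => /prodf_neq0; apply.
Qed.

Lemma exists_positive_off_subspace p (B : 'M[R]_(p, m)) v : ~~ (v <= B)%MS ->
  exists c, (forall u, (u <= B)%MS -> fval c u = 0) /\ 0 < fval c v.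
Proof.
rewrite submxE => vB; exists (cokermx B *m (v *m cokermx B)^T); split.
  by move=> u; rewrite fvalMl submxE => /eqP ->; rewrite fval0r.
by rewrite fvalMl fval_tr_gt0.
Qed.

Lemma exists_positive_on_pair u v : ~~ (u <= v)%MS -> ~~ (v <= u)%MS ->
  exists g, 0 < fval g u /\ 0 < fval g v.
Proof.
move=> uv vu; have [cu [cu0 cv_gt0]] := exists_positive_off_subspace vu.
have [cv [cv0 cu_gt0]] := exists_positive_off_subspace uv.
exists (cu + cv); rewrite !fvalDl (cu0 u) ?(cv0 v) ?submx_refl // add0r addr0.
by split.
Qed.

End Functionals.

Section Codegree.
Variables (R : realType) (n m : nat) (V : 'I_n -> 'rV[R]_m).
(* Without nonzero functionals the minimum defining [codeg_star] is its
   default value [n]. *)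
Hypothesis m_gt0 : (0 < m)%N.
Implicit Types (S A B : {set 'I_n}) (c g : 'cV[R]_m).

Lemma exists_nonzero_functional : exists c : 'cV[R]_m, c != 0.
Proof.
by exists (const_mx 1); apply/matrix0Pn; exists (Ordinal m_gt0), 0; rewrite mxE oner_eq0.
Qed.

Lemma card_le_n S : (#|S| <= n)%N.
Proof. by rewrite -[n in (_ <= n)%N]card_ord max_card. Qed.

Lemma cnt_le_gt S c : (cnt_le V S c + cnt_gt V S c)%N = #|S|.
Proof.
rewrite /cnt_le /cnt_gt -(cardsID [set i | fval c (V i) <= 0] S); congr (_ + _)%N.
  by apply: eq_card => i; rewrite !inE andbC.
by apply: eq_card => i; rewrite !inE -ltNge andbC.
Qed.

Lemma cnt_le_card S c : (cnt_le V S c <= #|S|)%N.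
Proof. by rewrite -(cnt_le_gt S c) leq_addr. Qed.

Lemma cnt_le0 S : cnt_le V S 0 = #|S|.
Proof. by apply: eq_card => i; rewrite !inE fval0l lexx andbT. Qed.

Lemma codeg_star_le S c : (codeg_star V S <= cnt_le V S c)%N.
Proof.
have le_nz d : d != 0 -> (codeg_star V S <= cnt_le V S d)%N.
  move=> d0; have lt : (cnt_le V S d < n.+1)%N.
    by rewrite ltnS (leq_trans (cnt_le_card S d)) ?card_le_n.
  rewrite /codeg_star -minEnat.
  apply: (bigmin_le_cond _ (j := Ordinal lt) (fun k : 'I_n.+1 => k : nat)).
  by apply/asboolP; exists d.
have [c0 c0_nz] := exists_nonzero_functional.
have [-> | c_nz] := eqVneq c 0; last exact: le_nz.
by rewrite cnt_le0 (leq_trans (le_nz _ c0_nz)) ?cnt_le_card.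
Qed.

Lemma codeg_star_attained S :
  exists2 c, c != 0 & cnt_le V S c = codeg_star V S.
Proof.
have [c0 c0_nz] := exists_nonzero_functional.
have lt : (cnt_le V S c0 < n.+1)%N.
  by rewrite ltnS (leq_trans (cnt_le_card S c0)) ?card_le_n.
rewrite /codeg_star -minEnat.
pose P (k : 'I_n.+1) := `[< exists c, c != 0 /\ cnt_le V S c = k >].
have P0 : P (Ordinal lt) by apply/asboolP; exists c0.
have [k Pk ->] := eq_bigmin (x := n) (Ordinal lt) P (fun k : 'I_n.+1 => k : nat) P0
  (fun k _ => ltn_ord k : (k <= n)%N).
by move: Pk => /asboolP [c [c_nz <-]]; exists c.
Qed.

Lemma cnt_le_setU A B c : [disjoint A & B] ->
  cnt_le V (A :|: B) c = (cnt_le V A c + cnt_le V B c)%N.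
Proof.
move=> AB; rewrite /cnt_le.
have -> : [set i in A :|: B | fval c (V i) <= 0] =
    [set i in A | fval c (V i) <= 0] :|: [set i in B | fval c (V i) <= 0].
  by apply/setP => i; rewrite !inE andb_orl.
apply/eqP; rewrite (leq_card_setU _ _).2.
by apply: disjointW AB; apply/subsetP => i; rewrite inE => /andP [].
Qed.

Lemma codeg_star_setU A B : [disjoint A & B] ->
  (codeg_star V A + codeg_star V B <= codeg_star V (A :|: B))%N.
Proof.
move=> AB; have [c _ <-] := codeg_star_attained (A :|: B).
by rewrite cnt_le_setU // leq_add ?codeg_star_le.
Qed.

Lemma deg_star_codeg S :
  deg_star V S = (#|S| - codeg_star V S)%:Z - (vrank V S)%:Z.
Proof.
rewrite /deg_star; congr (_%:Z - _); apply/eqP; rewrite eqn_leq; apply/andP; split.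
  apply/bigmax_leqP => k /asboolP [c [_ <-]].
  by have := codeg_star_le S c; have := cnt_le_gt S c; lia.
have [c c_nz ce] := codeg_star_attained S.
have lt : (#|S| - codeg_star V S < n.+1)%N.
  by rewrite ltnS (leq_trans (leq_subr _ _)) ?card_le_n.
apply: (leq_bigmax_cond (Ordinal lt)); apply/asboolP; exists c; split => //=.
by rewrite -ce -(cnt_le_gt S c) addKn.
Qed.

End Codegree.

Section SylvesterGallai.
Variables (R : realType) (m : nat).
Implicit Types (a b o p u v w x e : 'rV[R]_m).

Definition on_line a b p := exists t : R, p = a + t *: (b - a).

Definition foot a b p :=
  a + (dot (p - a) (b - a) / dot (b - a) (b - a)) *: (b - a).

Definition line_dist2 a b p := dot (p - foot a b p) (p - foot a b p).

Lemma foot_on_line a b p : on_line a b (foot a b p).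
Proof. by exists (dot (p - a) (b - a) / dot (b - a) (b - a)). Qed.

Lemma on_lineE a b o q : a != b -> on_line a b o -> on_line a b q ->
  q = o + (dot (q - o) (b - a) / dot (b - a) (b - a)) *: (b - a).
Proof.
move=> ab [t ->] [t' ->]; rewrite (addrC a) addrKA -scalerBl dotZl mulfK.
  by rewrite addrC -addrA -scalerDl subrKC.
by rewrite dot_eq0 subr_eq0 eq_sym.
Qed.

Lemma dot_sub_foot a b p : a != b -> dot (p - foot a b p) (b - a) = 0.
Proof.
move=> ab; rewrite /foot opprD addrA (dotBl (p - a)) dotZl mulfVK ?subrr //.
by rewrite dot_eq0 subr_eq0 eq_sym.
Qed.

Lemma line_dist2_ge0 a b p : 0 <= line_dist2 a b p.
Proof. exact: dot_ge0. Qed.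

Lemma line_dist2_eq0 a b p : line_dist2 a b p = 0 -> on_line a b p.
Proof. by move/eqP; rewrite dot_eq0 subr_eq0 => /eqP ->; apply: foot_on_line. Qed.

Lemma line_dist2E a b p : a != b -> line_dist2 a b p =
  dot (p - a) (p - a) - dot (p - a) (b - a) ^+ 2 / dot (b - a) (b - a).
Proof.
move=> ab; have : dot (b - a) (b - a) != 0 by rewrite dot_eq0 subr_eq0 eq_sym.
rewrite /line_dist2 /foot opprD addrA; move: (p - a) (b - a) => A e E0.
by rewrite !dotBl !dotBr !dotZl !dotZr (dotC e A); field.
Qed.

Lemma dot_orth_combination o x e s1 s2 : dot x e = 0 ->
  dot ((o + s1 *: e) - (o + x)) ((o + s2 *: e) - (o + x)) =
  s1 * s2 * dot e e + dot x x.
Proof.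
move=> xe; rewrite !opprD !addrA !(addrC _ (- o)) !addrA addNr !add0r.
by rewrite !dotBl !dotBr !dotZl !dotZr (dotC e x) xe; ring.
Qed.

Lemma kelly_ineq (E H s1 s2 : R) : 0 < E -> 0 < H -> 0 <= s1 * s2 ->
  s1 ^+ 2 <= s2 ^+ 2 -> s1 != s2 ->
  0 < (s1 * s1 * E + H) - (s1 * s2 * E + H) ^+ 2 / (s2 * s2 * E + H) < H.
Proof.
move=> E0 H0 s12 sq s1s2.
have K0 : 0 < s2 * s2 * E + H by rewrite ltr_wpDl // mulr_ge0 -?expr2 ?sqr_ge0 ?ltW.
have -> : (s1 * s1 * E + H) - (s1 * s2 * E + H) ^+ 2 / (s2 * s2 * E + H) =
    H * E * (s1 - s2) ^+ 2 / (s2 * s2 * E + H).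
  by field; rewrite gt_eqF.
have d0 : 0 < (s1 - s2) ^+ 2 by rewrite lt_def sqr_ge0 sqrf_eq0 subr_eq0 s1s2.
rewrite divr_gt0 ?(mulr_gt0 (mulr_gt0 H0 E0) d0) //=.
rewrite ltr_pdivrMr // mulrAC -mulrA ltr_pM2l //.
have : s1 ^+ 2 <= s1 * s2 by nra.
nra.
Qed.

Lemma line_dist2_shrink o e x (s1 s2 : R) : e != 0 -> x != 0 -> dot x e = 0 ->
  0 <= s1 * s2 -> s1 ^+ 2 <= s2 ^+ 2 -> s1 != s2 ->
  [/\ o + x != o + s2 *: e,
      0 < line_dist2 (o + x) (o + s2 *: e) (o + s1 *: e) &
      line_dist2 (o + x) (o + s2 *: e) (o + s1 *: e) < dot x x].
Proof.
move=> e0 x0 xe s12 sq s1s2.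
have px : o + x != o + s2 *: e.
  apply: contra x0 => /eqP/addrI x_e; rewrite -dot_eq0 {2}x_e dotZr xe.
  by rewrite mulr0.
rewrite line_dist2E // !dot_orth_combination //.
by have /andP [] := kelly_ineq (dot_gt0 e0) (dot_gt0 x0) s12 sq s1s2.
Qed.

Lemma exists_same_side_pair (T : eqType) (f : T -> R) (x y z : T) :
  f x != f y -> f x != f z -> f y != f z ->
  exists i j, [/\ i \in [:: x; y; z], j \in [:: x; y; z], f i != f j,
                  0 <= f i * f j & f i ^+ 2 <= f j ^+ 2].
Proof.
move=> xy xz yz.
have ordered i j : i \in [:: x; y; z] -> j \in [:: x; y; z] -> f i != f j ->
    0 <= f i * f j -> exists i j, [/\ i \in [:: x; y; z], j \in [:: x; y; z],
                  f i != f j, 0 <= f i * f j & f i ^+ 2 <= f j ^+ 2].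
  move=> iI jI ij ij0; case: (lerP (f i ^+ 2) (f j ^+ 2)) => sq.
    by exists i, j; split.
  by exists j, i; split => //; [rewrite eq_sym | rewrite mulrC | apply: ltW].
have [xy0|xy0] := lerP 0 (f x * f y).
  by apply: (ordered x y); rewrite ?inE ?eqxx ?orbT.
have [xz0|xz0] := lerP 0 (f x * f z).
  by apply: (ordered x z); rewrite ?inE ?eqxx ?orbT.
by apply: (ordered y z); rewrite ?inE ?eqxx ?orbT //; nra.
Qed.

Section PointConfiguration.
Variables (I : finType) (S : {set I}) (P : I -> 'rV[R]_m).
Hypothesis third_point : forall a b : I, a \in S -> b \in S -> P a != P b ->
  exists2 c, c \in S & [/\ P c != P a, P c != P b & on_line (P a) (P b) (P c)].

(* Among three points of the line [ab], two lie on the same side of the foot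
   [o] of the perpendicular from [p]; the one closer to [o] is closer to the
   line through [p] and the other one than [p] is to [ab]. *)
Lemma exists_closer_point_line (a b p : I) : a \in S -> b \in S -> P a != P b ->
  0 < line_dist2 (P a) (P b) (P p) -> exists i j, [/\ i \in S, j \in S,
  P p != P j, 0 < line_dist2 (P p) (P j) (P i) &
  line_dist2 (P p) (P j) (P i) < line_dist2 (P a) (P b) (P p)].
Proof.
move=> aS bS ab d_gt0.
set e := P b - P a; set o := foot (P a) (P b) (P p); set x := P p - o.
have e0 : e != 0 by rewrite subr_eq0 eq_sym.
have xe : dot x e = 0 by apply: dot_sub_foot.
have x0 : x != 0 by rewrite -dot_eq0; apply: lt0r_neq0.
pose s i := dot (P i - o) e / dot e e.
have on_s i : on_line (P a) (P b) (P i) -> P i = o + s i *: e.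
  exact: on_lineE ab (foot_on_line _ _ _).
have s_neq i j : on_line (P a) (P b) (P i) -> on_line (P a) (P b) (P j) ->
    P i != P j -> s i != s j.
  by move=> /on_s Pi /on_s Pj; apply: contra => /eqP sij; rewrite Pi Pj sij.
have [c cS [ca cb c_line]] := third_point aS bS ab.
have a_line : on_line (P a) (P b) (P a) by exists 0; rewrite scale0r addr0.
have b_line : on_line (P a) (P b) (P b) by exists 1; rewrite scale1r addrC subrK.
have ac : P a != P c by rewrite eq_sym.
have bc : P b != P c by rewrite eq_sym.
have [i [j [iI jI sij sij0 sq]]] := exists_same_side_pair
  (s_neq _ _ a_line b_line ab) (s_neq _ _ a_line c_line ac)
  (s_neq _ _ b_line c_line bc).
have on3 k : k \in [:: a; b; c] -> k \in S /\ P k = o + s k *: e.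
  by rewrite !inE => /or3P [] /eqP ->; split => //; apply: on_s.
exists i, j; have [[iS ->] [jS ->]] := (on3 i iI, on3 j jI).
have -> : line_dist2 (P a) (P b) (P p) = dot x x by [].
have -> : P p = o + x by rewrite /x addrC subrK.
by have [] := line_dist2_shrink o e0 x0 xe sij0 sq sij.
Qed.

(* Kelly's proof: consider a point and a line through two points of the
   configuration at minimal positive distance. *)
Theorem sylvester_gallai (a b p : I) : a \in S -> b \in S -> p \in S -> P a != P b ->
  on_line (P a) (P b) (P p).
Proof.
move=> aS bS pS ab; case: (pselect (on_line (P a) (P b) (P p))) => // off; exfalso.
pose d (t : I * I * I) := line_dist2 (P t.1.2) (P t.2) (P t.1.1).
pose off_line (t : I * I * I) :=
  [&& t.1.1 \in S, t.1.2 \in S, t.2 \in S, P t.1.2 != P t.2 & 0 < d t].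
have : off_line (p, a, b).
  rewrite /off_line /= pS aS bS ab lt_def line_dist2_ge0 andbT /=.
  by apply/eqP => /line_dist2_eq0.
case/(arg_minP d) => [[[p' a'] b']] /and5P /= [p'S a'S b'S a'b' d_gt0] d_min.
have [i [j [iS jS p'j dpos dlt]]] := exists_closer_point_line a'S b'S a'b' d_gt0.
have := d_min (i, p', j); rewrite /off_line /d /= iS p'S jS p'j dpos leNgt dlt.
by move/(_ isT).
Qed.

End PointConfiguration.

End SylvesterGallai.

Lemma card_sign_partition (R : realDomainType) (I : finType) (S : {set I}) (f : I -> R) :
  #|S| = (#|[set i in S | (f i < 0)%R]| + #|[set i in S | f i == 0%R]| +
          #|[set i in S | (0 < f i)%R]|)%N.
Proof.
rewrite -(cardsID [set i | f i < 0] S) -(cardsID [set i | f i == 0] (S :\: _)).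
rewrite addnA; congr (_ + _ + _)%N; apply: eq_card => i; rewrite !inE.
- by rewrite andbC.
- by case: (i \in S); rewrite ?andbF //=; case: ltgtP.
- by case: (i \in S); rewrite ?andbF //=; case: ltgtP.
Qed.

Section VectorRank.
Variables (R : realType) (n m : nat) (V : 'I_n -> 'rV[R]_m).
Implicit Types (S T : {set 'I_n}).

Lemma vrank_le_rank p (B : 'M[R]_(p, m)) S :
  {in S, forall i, (V i <= B)%MS} -> (vrank V S <= \rank B)%N.
Proof.
by move=> SB; apply: mxrankS; apply/sumsmx_subP => i iS; rewrite genmxE SB.
Qed.

Lemma vrank_le_add_line S T (u : 'rV[R]_m) :
  {in S, forall i, i \notin T -> (V i <= u)%MS} -> (vrank V S <= (vrank V T).+1)%N.
Proof.
move=> Su; rewrite /vrank.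
apply: (@leq_trans (\rank (\sum_(i in T) <<V i>> + u)%MS)).
  apply: mxrankS; apply/sumsmx_subP => i iS; rewrite genmxE.
  case iT: (i \in T); last by rewrite (submx_trans _ (addsmxSr _ _)) // Su ?iT.
  by apply: submx_trans (addsmxSl _ _); rewrite (sumsmx_sup i) ?genmxE.
apply: leq_trans (mxrank_adds_leqif _ _) _.
by rewrite -[X in (_ <= X)%N]addn1 leq_add2l rank_leq_row.
Qed.

End VectorRank.

Section AffineChart.
Variables (R : realType) (n m : nat) (V : 'I_n -> 'rV[R]_m).
Variables (S : {set 'I_n}) (h : 'cV[R]_m).
Hypothesis h_nz : {in S, forall i, fval h (V i) != 0}.

(* Central projection of [V i] onto the affine hyperplane [fval h = 1]. *)
Definition chart i := (fval h (V i))^-1 *: V i.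

Lemma chart_scale i : i \in S -> V i = fval h (V i) *: chart i.
Proof. by move=> iS; rewrite /chart scalerA mulfV ?scale1r ?h_nz. Qed.

Lemma chart_inj_sub i j : i \in S -> chart i = chart j -> (V i <= V j)%MS.
Proof. by move=> iS ij; rewrite (chart_scale iS) ij scalemx_sub ?scalemx_sub. Qed.

Lemma chart_on_line a b c : a \in S -> b \in S -> c \in S ->
  (V c <= V a + V b)%MS -> on_line (chart a) (chart b) (chart c).
Proof.
move=> aS bS cS /sub_addsmxP [[x y] /= Vc].
pose ha := fval h (V a); pose hb := fval h (V b); pose hc := fval h (V c).
have hcE : hc = x 0 0 * ha + y 0 0 * hb.
  by rewrite /hc Vc {1}(mx11_scalar x) {1}(mx11_scalar y) !mul_scalar_mx fvalDr !fvalZr.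
have [ha0 hb0 hc0] : [/\ ha != 0, hb != 0 & hc != 0] by rewrite !h_nz.
exists (y 0 0 * hb / hc).
rewrite /chart -/ha -/hb -/hc Vc {1}(mx11_scalar x) {1}(mx11_scalar y).
rewrite !mul_scalar_mx scalerDr scalerBr !scalerA addrCA addrC -scalerBl.
by congr (_ *: _ + _ *: _); rewrite hcE in hc0 *; field; rewrite ?ha0 ?hb0.
Qed.

Lemma sub_of_chart_on_line a b i : i \in S ->
  on_line (chart a) (chart b) (chart i) -> (V i <= V a + V b)%MS.
Proof.
move=> iS [t Pi]; rewrite (chart_scale iS) Pi scalemx_sub //.
by rewrite addmx_sub ?scalemx_sub ?addmx_sub ?eqmx_opp ?scalemx_sub ?addsmxSl ?addsmxSr.
Qed.

End AffineChart.

Section Balanced.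
Variables (R : realType) (n m : nat) (V : 'I_n -> 'rV[R]_m).
Hypothesis m_gt0 : (0 < m)%N.
Implicit Types (S : {set 'I_n}) (c g : 'cV[R]_m).

Lemma exists_functional_kernel p (B : 'M[R]_(p, m)) :
  exists c, forall i, (fval c (V i) == 0) = (V i <= B)%MS.
Proof.
have [h h_nz] := exists_nonvanishing_functional (fun i => V i *m cokermx B).
exists (cokermx B *m h) => i; rewrite fvalMl submxE.
have [-> | nz] := eqVneq (V i *m cokermx B) 0; first by rewrite fval0r !eqxx.
by rewrite (negbTE (h_nz i nz)).
Qed.

Lemma exists_sign_preserving_shift c g : exists2 e : R, 0 < e & forall i,
  (0 < fval c (V i) -> 0 < fval (c + e *: g) (V i)) /\
  (fval c (V i) < 0 -> fval (c + e *: g) (V i) < 0).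
Proof.
have [e e_gt0 small] :=
  exists_small_scale (fun i => fval c (V i)) (fun i => fval g (V i)).
exists e => // i; rewrite fvalDl fvalZl.
have [-> | ci] := eqVneq (fval c (V i)) 0; first by rewrite ltxx.
exact: sign_addr_small (small i ci).
Qed.

Definition balanced S := #|S| = (2 * codeg_star V S).+1.

(* Tilting [c] towards [g] moves its zeros to the positive side. *)
Lemma codeg_star_le_neg S c g :
  {in S, forall i, fval c (V i) = 0 -> 0 < fval g (V i)} ->
  (codeg_star V S <= #|[set i in S | (fval c (V i) < 0)%R]|)%N.
Proof.
move=> g_pos; have [e e_gt0 shift] := exists_sign_preserving_shift c g.
apply: leq_trans (codeg_star_le _ m_gt0 S (c + e *: g)) (subset_leq_card _).
apply/subsetP => i; rewrite !inE => /andP [iS]; rewrite iS /=; apply: contraLR.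
rewrite -leNgt -ltNge le_eqVlt => /orP [/eqP ci | /(shift i).1 //].
by rewrite fvalDl fvalZl -ci add0r mulr_gt0 // g_pos.
Qed.

Lemma card_zero_set_le1 S c g : balanced S ->
  {in S, forall i, fval c (V i) = 0 -> 0 < fval g (V i)} ->
  (#|[set i in S | fval c (V i) == 0%R]| <= 1)%N.
Proof.
move=> bS g_pos; have neg := codeg_star_le_neg g_pos.
have pos : (codeg_star V S <= #|[set i in S | (0 < fval c (V i))%R]|)%N.
  have -> : [set i in S | 0 < fval c (V i)] = [set i in S | fval (- c) (V i) < 0].
    by apply/setP => i; rewrite !inE fvalNl oppr_lt0.
  apply: (@codeg_star_le_neg _ _ g) => i iS /eqP.
  by rewrite fvalNl oppr_eq0 => /eqP; apply: g_pos.
set Z := [set i in S | fval c (V i) == 0].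
have := leq_add (leq_add neg (leqnn #|Z|)) pos.
rewrite -(card_sign_partition S (fun i => fval c (V i))) bS; clearbody Z; lia.
Qed.

Lemma card_subspace_le1 S p (B : 'M[R]_(p, m)) g : balanced S ->
  {in S, forall i, (V i <= B)%MS -> 0 < fval g (V i)} ->
  (#|[set i in S | (V i <= B)%MS]| <= 1)%N.
Proof.
move=> bS g_pos; have [c cB] := exists_functional_kernel B.
have -> : [set i in S | (V i <= B)%MS] = [set i in S | fval c (V i) == 0].
  by apply/setP => i; rewrite !inE cB.
by apply: card_zero_set_le1 bS _ => i iS /eqP; rewrite cB; apply: g_pos.
Qed.

Definition antipodal_pair S := exists u w, [/\ u \in S, w \in S &
  exists2 l : R, 0 < l & V w = - (l *: V u)].

Section NoAntipodalPair.
Variable S : {set 'I_n}.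
Hypotheses (bS : balanced S) (S_nz : {in S, forall i, V i != 0}).
Hypothesis no_antipodal : ~ antipodal_pair S.

Lemma card_line_le1 u : u \in S -> (#|[set i in S | (V i <= V u)%MS]| <= 1)%N.
Proof.
move=> uS; apply: card_subspace_le1 (V u)^T bS _ => i iS /sub_rVP [a Vi].
have a0 : a != 0 by apply: contraNneq (S_nz iS) => a0; rewrite Vi a0 scale0r.
rewrite Vi fvalZr pmulr_rgt0 ?fval_tr_gt0 ?S_nz //.
rewrite ltNge le_eqVlt (negbTE a0) /=; apply/negP => a_lt0; apply: no_antipodal.
by exists u, i; split => //; exists (- a); rewrite ?oppr_gt0 // scaleNr opprK.
Qed.

Lemma not_parallel i j : i \in S -> j \in S -> i != j -> ~~ (V i <= V j)%MS.
Proof.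
move=> iS jS ij; apply/negP => Vij; have := card_line_le1 jS.
by rewrite (cardsD1 i) (cardsD1 j) !inE iS jS Vij submx_refl eq_sym ij.
Qed.

Lemma exists_third_in_span z w : z \in S -> w \in S -> z != w ->
  exists x, [/\ x \in S, x != z, x != w & (V x <= V z + V w)%MS].
Proof.
move=> zS wS zw.
case: (pselect (exists x, [/\ x \in S, x != z, x != w & (V x <= V z + V w)%MS]))
  => // no_third; exfalso.
have wz : w != z by rewrite eq_sym.
have [g [gz gw]] :=
  exists_positive_on_pair (not_parallel zS wS zw) (not_parallel wS zS wz).
have g_pos : {in S, forall i, (V i <= V z + V w)%MS -> 0 < fval g (V i)}.
  move=> i iS iB; have [-> // | iz] := eqVneq i z; have [-> // | iw] := eqVneq i w.
  by case: no_third; exists i.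
have := card_subspace_le1 bS g_pos.
by rewrite (cardsD1 z) (cardsD1 w) !inE zS wS wz addsmxSl addsmxSr.
Qed.

Lemma balanced_vrank_le2 : (vrank V S <= 2)%N.
Proof.
have [h h_nz] := exists_nonvanishing_functional V.
have hS : {in S, forall i, fval h (V i) != 0} by move=> i /S_nz /h_nz.
pose P := chart V h.
have P_neq i j : i \in S -> j \in S -> i != j -> P i != P j.
  move=> iS jS ij; apply: contraNneq (not_parallel iS jS ij).
  exact: (chart_inj_sub (j := j) hS iS).
have third a b : a \in S -> b \in S -> P a != P b -> exists2 c, c \in S &
    [/\ P c != P a, P c != P b & on_line (P a) (P b) (P c)].
  move=> aS b_S ab; have ab' : a != b by apply: contraNneq ab => ->.
  have [c [cS ca cb cab]] := exists_third_in_span aS b_S ab'.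
  by exists c => //; split; [apply: P_neq | apply: P_neq | apply: (chart_on_line hS)].
case: (set_0Vmem S) => [-> | [a aS]]; first by rewrite /vrank big_set0 mxrank0.
case: (pselect (exists2 b, b \in S & b != a)) => [[b b_S ba] | only_a].
  apply: leq_trans (vrank_le_rank (B := (V a + V b)%MS) _) _.
    move=> i iS; apply: (sub_of_chart_on_line hS iS).
    by apply: (sylvester_gallai third aS b_S iS); rewrite P_neq // eq_sym.
  by apply: leq_trans (mxrank_adds_leqif _ _) _; rewrite (leq_add (rank_leq_row _) (rank_leq_row _)).
apply: leq_trans (vrank_le_rank (B := V a) _) (leq_trans (rank_leq_row _) _) => //.
by move=> i iS; have [-> // | ia] := eqVneq i a; case: only_a; exists i.
Qed.

End NoAntipodalPair.
End Balanced.

Section AntipodalPair.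
Variables (R : realType) (n m : nat) (V : 'I_n -> 'rV[R]_m).
Hypothesis m_gt0 : (0 < m)%N.
Variables (u w : 'I_n) (l : R).
Hypotheses (u_nz : V u != 0) (l_gt0 : 0 < l) (Vw : V w = - (l *: V u)).

Lemma antipodal_neq : u != w.
Proof.
apply: contra u_nz => /eqP uw; move: Vw; rewrite -uw => /eqP.
rewrite -subr_eq0 opprK -{1}(scale1r (V u)) -scalerDl scaler_eq0.
by rewrite (gt_eqF (addr_gt0 ltr01 l_gt0)).
Qed.

Lemma cnt_le_pair c :
  cnt_le V [set u; w] c = if fval c (V u) == 0 then 2%N else 1%N.
Proof.
have cnt1 i : cnt_le V [set i] c = (fval c (V i) <= 0)%R.
  rewrite /cnt_le; have [ci | ci] := boolP (fval c (V i) <= 0).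
    have -> : [set j in [set i] | fval c (V j) <= 0] = [set i].
      by apply/setP => j; rewrite !inE; case: eqP => // ->.
    by rewrite cards1.
  have -> : [set j in [set i] | fval c (V j) <= 0] = set0.
    by apply/setP => j; rewrite !inE; case: eqP => // ->; rewrite (negbTE ci).
  by rewrite cards0.
rewrite cnt_le_setU; last by rewrite disjoints1 inE antipodal_neq.
rewrite !cnt1 Vw fvalNr fvalZr oppr_le0 pmulr_rge0 //.
by case: ltgtP.
Qed.

Lemma codeg_star_pair : codeg_star V [set u; w] = 1%N.
Proof.
apply/eqP; rewrite eqn_leq; apply/andP; split.
  by rewrite (leq_trans (codeg_star_le _ m_gt0 _ (V u)^T)) // cnt_le_pair gt_eqF ?fval_tr_gt0.
have [c _ <-] := codeg_star_attained V m_gt0 [set u; w].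
by rewrite cnt_le_pair; case: ifP.
Qed.

Lemma codeg_star_peel (S : {set 'I_n}) : u \in S -> w \in S ->
  codeg_star V S = (codeg_star V (S :\: [set u; w])).+1.
Proof.
move=> uS wS; set S' := S :\: [set u; w].
have SE : S = [set u; w] :|: S'.
  by rewrite -{1}(setID S [set u; w]) (setIidPr _) // subUset !sub1set uS wS.
have dis : [disjoint [set u; w] & S'].
  by rewrite disjoint_sym disjoint_subset; apply/subsetP => x; rewrite !inE => /andP [].
apply/eqP; rewrite eqn_leq; apply/andP; split; last first.
  by rewrite SE -add1n -codeg_star_pair codeg_star_setU.
have [c _ <-] := codeg_star_attained V m_gt0 S'.
have [e e_gt0 shift] := exists_sign_preserving_shift V c (V u)^T.
have c'u : fval (c + e *: (V u)^T) (V u) != 0.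
  have [cu | cu | cu] := ltgtP (fval c (V u)) 0.
  - by rewrite lt_eqF // (shift u).2.
  - by rewrite gt_eqF // (shift u).1.
  by rewrite fvalDl fvalZl cu add0r mulf_neq0 ?gt_eqF ?fval_tr_gt0.
apply: leq_trans (codeg_star_le _ m_gt0 S (c + e *: (V u)^T)) _.
rewrite SE cnt_le_setU // cnt_le_pair (negbTE c'u) add1n ltnS.
apply: subset_leq_card; apply/subsetP => i; rewrite !inE => /andP [iS'].
by rewrite iS' /=; apply: contraLR; rewrite -!ltNge; apply: (shift i).1.
Qed.

Lemma card_setD_pair (S : {set 'I_n}) : u \in S -> w \in S ->
  #|S| = (2 + #|S :\: [set u; w]|)%N.
Proof.
move=> uS wS; rewrite -(cardsID [set u; w] S) (setIidPr _) ?cards2 ?antipodal_neq //.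
by rewrite subUset !sub1set uS wS.
Qed.

Lemma balanced_peel (S : {set 'I_n}) : u \in S -> w \in S -> balanced V S ->
  balanced V (S :\: [set u; w]).
Proof.
move=> uS wS; rewrite /balanced (codeg_star_peel uS wS) (card_setD_pair uS wS).
lia.
Qed.

End AntipodalPair.

Section Blocks.
Variables (R : realType) (n m : nat) (V : 'I_n -> 'rV[R]_m).
Implicit Types (S A : {set 'I_n}).

Definition codeg_blocks S k (B : 'I_k -> {set 'I_n}) :=
  [/\ forall i, B i \subset S,
      forall i j, i != j -> [disjoint B i & B j],
      codeg_star V S = \sum_(i < k) codeg_star V (B i) &
      forall i, (0 < codeg_star V (B i))%N].

Lemma codeg_blocks_add S A k B : A \subset S -> (0 < codeg_star V A)%N ->
  codeg_star V S = (codeg_star V A + codeg_star V (S :\: A))%N ->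
  codeg_blocks (S :\: A) B ->
  codeg_blocks S (fun i : 'I_k.+1 => if unlift ord0 i is Some j then B j else A).
Proof.
move=> AS A_pos SA [BS Bdis Bsum Bpos].
have BA j : [disjoint B j & A].
  apply: disjointWl (BS j) _; rewrite disjoint_subset.
  by apply/subsetP => x; rewrite !inE => /andP [].
split.
- move=> i; case: unliftP => [j _|_] //.
  by apply: subset_trans (BS j) _; apply: subsetDl.
- move=> i j; case: unliftP => [i' ->|->]; case: unliftP => [j' ->|->] //.
  + by rewrite (inj_eq lift_inj); apply: Bdis.
  + by move=> _; rewrite disjoint_sym; apply: BA.
- rewrite big_ord_recl unlift_none SA Bsum; congr (_ + _)%N.
  by apply: eq_bigr => i _; rewrite liftK.
- by move=> i; case: unliftP.
Qed.

Lemma codeg_decomposition_of_blocks k (B : 'I_k -> {set 'I_n}) :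
  codeg_blocks setT B -> codeg_decomposition V (fun x => [pick i | x \in B i]).
Proof.
case=> _ Bdis Bsum Bpos.
have blockE i : [set x | [pick j | x \in B j] == Some i] = B i.
  apply/setP => x; rewrite inE; case: pickP => [j xj | none]; last by rewrite none.
  apply/eqP/idP => [[<-] // | xi]; congr Some; apply/eqP.
  by apply: contraTT xi => ji; rewrite (disjointFr (Bdis _ _ ji)).
by split; [rewrite Bsum; apply: eq_bigr => i _ | move=> i]; rewrite blockE.
Qed.

End Blocks.

Section Decomposition.
Variables (R : realType) (n m : nat) (V : 'I_n -> 'rV[R]_m).
Hypothesis m_gt0 : (0 < m)%N.

Lemma codeg_blocks_peel (S : {set 'I_n}) u w l k (B : 'I_k -> {set 'I_n}) :
  u \in S -> w \in S -> V u != 0 -> 0 < l -> V w = - (l *: V u) ->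
  codeg_blocks V (S :\: [set u; w]) B -> (vrank V (S :\: [set u; w]) <= k.+1)%N ->
  exists k' (B' : 'I_k' -> {set 'I_n}), codeg_blocks V S B' /\ (vrank V S <= k'.+1)%N.
Proof.
move=> uS wS u_nz l_gt0 Vw BS' rank_S'.
exists k.+1, (fun i => if unlift ord0 i is Some j then B j else [set u; w]); split.
  apply: codeg_blocks_add BS'; rewrite ?(codeg_star_pair m_gt0 u_nz l_gt0 Vw) //.
    by rewrite subUset !sub1set uS wS.
  by rewrite (codeg_star_peel m_gt0 u_nz l_gt0 Vw uS wS).
apply: leq_trans (vrank_le_add_line (T := S :\: [set u; w]) (u := V u) _) _; last by rewrite ltnS.
move=> i iS; rewrite !inE iS andbT negbK => /orP [] /eqP ->.
  by rewrite submx_refl.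
by rewrite Vw -scaleNr scalemx_sub.
Qed.

Lemma codeg_blocks_vrank_le2 (S : {set 'I_n}) : balanced V S ->
  (vrank V S <= 2)%N ->
  exists k (B : 'I_k -> {set 'I_n}), codeg_blocks V S B /\ (vrank V S <= k.+1)%N.
Proof.
move=> bS rank_S; have [c0 | c_pos] := posnP (codeg_star V S); last first.
  exists 1%N, (fun _ => S); split => //; split => //.
  - by move=> i j; rewrite !ord1 eqxx.
  - by rewrite big_ord1.
exists 0%N, (fun _ => set0); split.
  by split; [case | case | rewrite big_ord0 | case].
move: bS; rewrite /balanced c0 => /eqP /cards1P [a ->].
apply: leq_trans (vrank_le_rank (B := V a) _) (rank_leq_row _).
by move=> i; rewrite inE => /eqP ->.
Qed.

Lemma balanced_codeg_blocks (S : {set 'I_n}) :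
  balanced V S -> {in S, forall i, V i != 0} ->
  exists k (B : 'I_k -> {set 'I_n}), codeg_blocks V S B /\ (vrank V S <= k.+1)%N.
Proof.
move: {2}#|S| (leqnn #|S|) => N; elim: N S => [|N IH] S S_N bS S_nz.
  by move: S_N; rewrite bS.
case: (pselect (antipodal_pair V S)) => [[u [w [uS wS [l l_gt0 Vw]]]] | no_ap].
  have u_nz := S_nz u uS; set S' := S :\: [set u; w].
  have S'_N : (#|S'| <= N)%N.
    by move: S_N; rewrite (card_setD_pair u_nz l_gt0 Vw uS wS) -/S'; lia.
  have S'_nz : {in S', forall i, V i != 0}.
    by move=> i; rewrite inE => /andP [_ /S_nz].
  have [k [B [BS' rank_S']]] :=
    IH S' S'_N (balanced_peel m_gt0 u_nz l_gt0 Vw uS wS bS) S'_nz.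
  exact: codeg_blocks_peel uS wS u_nz l_gt0 Vw BS' rank_S'.
by apply: codeg_blocks_vrank_le2 => //; apply: balanced_vrank_le2.
Qed.

End Decomposition.

Theorem mainTheorem6 (R : realType) (n m : nat) (V : 'I_n -> 'rV[R]_m)
    (r : nat) (delta : int) :
  vrank V setT = r ->
  (forall i, V i != 0) ->
  deg_star V setT = delta ->
  (n%:Z = 2 * r%:Z + 2 * delta - 1) ->
  exists (k : nat) (blk : 'I_n -> option 'I_k),
    codeg_decomposition V blk /\ (r%:Z - 1 <= k%:Z).
Proof.
move=> rankV V_nz degV n_eq.
have n_gt0 : (0 < n)%N by case: (posnP n) n_eq => // ->; lia.
have m_gt0 : (0 < m)%N.
  move: (V_nz (Ordinal n_gt0)); case: m V {rankV degV V_nz} => // V.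
  by rewrite thinmx0 eqxx.
have codeg_le := codeg_star_le V m_gt0 setT 0; rewrite cnt_le0 cardsT card_ord in codeg_le.
have bV : balanced V setT.
  move: degV n_eq; rewrite deg_star_codeg // cardsT card_ord rankV /balanced cardsT card_ord.
  lia.
have [k [B [blocks rank_le]]] := balanced_codeg_blocks m_gt0 bV (fun i _ => V_nz i).
exists k, (fun x => [pick i | x \in B i]).
split; first exact: codeg_decomposition_of_blocks.
by rewrite rankV in rank_le; lia.
Qed.
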